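(* Let $a\in\mathbb{R}$, $b\in(a,\infty)$, $h\in\mathbb{N}$, $v_1,\dots,v_h,w_1,\dots,w_h\in(0,\infty)$, let $f,p\in C(\mathbb{R},\mathbb{R})$ satisfy for all $x\in\mathbb{R}$ that $p(x)\ge0$ and $p^{-1}((0,\infty))=(a,b)$, with $\mathcal{N}^\theta$, $\mathcal{L}$, $I_i^\theta$, $\operatorname{Lip}$ as in the context. Assume that $f$ is non-decreasing and satisfies $\operatorname{Lip}(f)<\min_{i\in\{1,\dots,h\}}v_iw_i$, let $\vartheta\in\mathbb{R}^{h+1}$ satisfy $(\nabla\mathcal{L})(\vartheta)=0$, and let $V=\sup_{x\in(a,b)}\sum_{i\in\{1,\dots,h\},\,x\in I_i^\vartheta}v_i$. Then $$\max\{\mathcal{N}^\vartheta(b)-f(b),\,f(a)-\mathcal{N}^\vartheta(a)\}\le V.$$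
   Context: Let $\mathfrak{c}(x)=\min\{\max\{x,0\},1\}$. For $F\in C(\mathbb{R},\mathbb{R})$ let $\operatorname{Lip}(F)=\sup_{x,y\in[a,b],x\ne y}\frac{|F(x)-F(y)|}{|x-y|}$. For $\theta=(\theta_1,\dots,\theta_{h+1})\in\mathbb{R}^{h+1}$ and $i\in\{1,\dots,h\}$ let $\psi_i(\theta)=-[w_i]^{-1}\theta_i$, $I_i^\theta=(\psi_i(\theta),\psi_i(\theta)+[w_i]^{-1})\cap(a,b)$, $\mathcal{N}^\theta(x)=\theta_{h+1}+\sum_{i=1}^hv_i\mathfrak{c}(w_ix+\theta_i)$, and $\mathcal{L}(\theta)=\int_a^b(\mathcal{N}^\theta(x)-f(x))^2p(x)\,\mathrm{d}x$ ($\mathcal{L}$ is continuously differentiable). *)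

From Stdlib Require Import Reals Lra.
From Coquelicot Require Import Coquelicot.
Open Scope R_scope.

Definition clip (x : R) : R := Rmin (Rmax x 0) 1.

Fixpoint sum1 (h : nat) (g : nat -> R) : R :=
  match h with
  | O => 0
  | S k => sum1 k g + g (S k)
  end.

(* Parameter vectors theta in R^{h+1} are functions nat -> R, with the
   relevant coordinates theta 1, ..., theta (h+1). *)

Definition realization (h : nat) (v w : nat -> R) (theta : nat -> R) (x : R) : R :=
  theta (S h) + sum1 h (fun i => v i * clip (w i * x + theta i)).

(* L(theta) = int_a^b (N^theta(x) - f(x))^2 p(x) dx  (Riemann integral;
   the integrand is continuous) *)
Definition risk (a b : R) (h : nat) (v w : nat -> R) (f p : R -> R)
  (theta : nat -> R) : R :=
  RInt (fun x => (realization h v w theta x - f x) ^ 2 * p x) a b.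

Definition upd (theta : nat -> R) (j : nat) (t : R) : nat -> R :=
  fun k => if Nat.eqb k j then t else theta k.

Definition psi (w : nat -> R) (theta : nat -> R) (i : nat) : R :=
  - (/ w i) * theta i.

(* x in I_i^theta = (psi_i, psi_i + 1/w_i) cap (a,b); membership is decided
   inline in active_sum below. *)

Definition active_sum (a b : R) (h : nat) (v w : nat -> R) (theta : nat -> R)
  (x : R) : R :=
  sum1 h (fun i =>
    match Rlt_dec (psi w theta i) x, Rlt_dec x (psi w theta i + / w i),
          Rlt_dec a x, Rlt_dec x b with
    | left _, left _, left _, left _ => v i
    | _, _, _, _ => 0
    end).

Definition Vsup (a b : R) (h : nat) (v w : nat -> R) (theta : nat -> R) : Rbar :=
  Lub_Rbar (fun y => exists x, a < x < b /\ y = active_sum a b h v w theta x).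

From Stdlib Require Import Reals Lra Lia Classical.
From Coquelicot Require Import Coquelicot.
Open Scope R_scope.

(* Let r = N^theta - f be the residual.  Stationarity of L in the output bias
   forbids r to have a strict constant sign on (a,b).  The clipped units are not
   differentiable, so for a hidden bias theta_i we use one-sided shifts instead of
   the partial derivative: if r had a constant sign on the active region of unit i,
   strictly at one point, shifting theta_i in the direction of that sign would
   increase L at a linear rate (near the edges of the active region r is almost of
   the right sign by continuity), contradicting (grad L)(theta) = 0.
   Now let N(b) > f(b) and let x0 be the last point of (a,b) with r(x0) <= 0.  A unit
   inactive at x0 cannot switch on inside (x0,b), where r > 0, so it contributes
   nothing to N(b) - N(x0), while a unit active at x0 contributes at most v_i.  As f
   is nondecreasing, N(b) - f(b) <= N(b) - N(x0) <= sum of the v_i active at x0 <= V.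
   The endpoint a is symmetric, with the first point of (a,b) where r >= 0. *)

Lemma clip_eq0 x : x <= 0 -> clip x = 0.
Proof. unfold clip, Rmin, Rmax; intros; repeat destruct Rle_dec; lra. Qed.

Lemma clip_eq1 x : 1 <= x -> clip x = 1.
Proof. unfold clip, Rmin, Rmax; intros; repeat destruct Rle_dec; lra. Qed.

Lemma clip_bounds x : 0 <= clip x <= 1.
Proof. unfold clip, Rmin, Rmax; repeat destruct Rle_dec; lra. Qed.

Lemma clip_lipschitz x y : Rabs (clip x - clip y) <= Rabs (x - y).
Proof.
  unfold clip, Rmin, Rmax, Rabs; repeat destruct Rle_dec; repeat destruct Rcase_abs; lra.
Qed.

Section ClipShift.

Variables (sg s u : R).
Hypothesis sg_unit : sg = 1 \/ sg = -1.

Lemma clip_shift_bounds : 0 <= s -> 0 <= sg * (clip (u + sg * s) - clip u) <= s.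
Proof.
  destruct sg_unit as [-> | ->]; unfold clip, Rmin, Rmax; repeat destruct Rle_dec; lra.
Qed.

Lemma clip_shift_support :
  0 <= s -> sg * (clip (u + sg * s) - clip u) <> 0 -> - s < u < 1 + s.
Proof.
  intros Hs Hne; destruct sg_unit as [-> | ->]; unfold clip, Rmin, Rmax in *;
  repeat destruct Rle_dec; split; (lra || (exfalso; apply Hne; lra)).
Qed.

Lemma clip_shift_interior :
  0 <= s <= u -> u <= 1 - s -> sg * (clip (u + sg * s) - clip u) = s.
Proof.
  intros; destruct sg_unit as [-> | ->]; unfold clip, Rmin, Rmax; repeat destruct Rle_dec; lra.
Qed.

End ClipShift.

Lemma continuity_id : continuity (fun x => x).
Proof. exact (derivable_continuous _ derivable_id). Qed.

Lemma continuity_clip : continuity clip.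
Proof.
  intros x eps Heps; exists eps; split; [exact Heps|].
  intros y [_ Hy]; simpl in *; unfold R_dist in *.
  eapply Rle_lt_trans; [apply clip_lipschitz | exact Hy].
Qed.

Lemma continuity_clip_comp F : continuity F -> continuity (fun x => clip (F x)).
Proof. intros HF; exact (continuity_comp F clip HF continuity_clip). Qed.

Lemma sum1_ext h g1 g2 :
  (forall i, (1 <= i <= h)%nat -> g1 i = g2 i) -> sum1 h g1 = sum1 h g2.
Proof.
  induction h as [|h IH]; intros H; simpl; [reflexivity|].
  rewrite IH; [rewrite H by lia; reflexivity | intros; apply H; lia].
Qed.

Lemma sum1_le h g1 g2 :
  (forall i, (1 <= i <= h)%nat -> g1 i <= g2 i) -> sum1 h g1 <= sum1 h g2.
Proof.
  induction h as [|h IH]; intros H; simpl; [lra|].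
  apply Rplus_le_compat; [apply IH; intros; apply H|apply H]; lia.
Qed.

Lemma sum1_nonneg h g : (forall i, (1 <= i <= h)%nat -> 0 <= g i) -> 0 <= sum1 h g.
Proof.
  intros H; apply Rle_trans with (sum1 h (fun _ => 0)); [|exact (sum1_le h _ _ H)].
  clear H; induction h; simpl; lra.
Qed.

Lemma sum1_minus h g1 g2 : sum1 h (fun i => g1 i - g2 i) = sum1 h g1 - sum1 h g2.
Proof. induction h as [|h IH]; simpl; [ring|rewrite IH; ring]. Qed.

Lemma continuity_sum1 h (F : nat -> R -> R) :
  (forall i, continuity (F i)) -> continuity (fun x => sum1 h (fun i => F i x)).
Proof.
  intros HF; induction h as [|h IH]; simpl.
  - apply continuity_const; intros ? ?; reflexivity.
  - exact (continuity_plus _ _ IH (HF (S h))).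
Qed.

Lemma sum1_upd h (F : nat -> R -> R) th i t : (1 <= i <= h)%nat ->
  sum1 h (fun k => F k (upd th i t k)) = sum1 h (fun k => F k (th k)) + (F i t - F i (th i)).
Proof.
  induction h as [|h IH]; intros Hi; [lia|simpl; unfold upd at 2].
  destruct (Nat.eq_dec i (S h)) as [->|Hne].
  - rewrite Nat.eqb_refl, (sum1_ext h _ (fun k => F k (th k))); [ring|].
    intros k Hk; unfold upd; replace (Nat.eqb k (S h)) with false; [reflexivity|].
    symmetry; apply Nat.eqb_neq; lia.
  - rewrite IH by lia; replace (Nat.eqb (S h) i) with false; [ring|].
    symmetry; apply Nat.eqb_neq; lia.
Qed.

Lemma continuity_realization h v w th : continuity (realization h v w th).
Proof.
  unfold realization; apply continuity_plus.
  - apply continuity_const; intros ? ?; reflexivity.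
  - apply (continuity_sum1 h (fun i x => v i * clip (w i * x + th i))); intros i.
    apply continuity_mult; [apply continuity_const; intros ? ?; reflexivity|].
    apply continuity_clip_comp, continuity_plus;
      [apply continuity_scal, continuity_id|apply continuity_const; intros ? ?; reflexivity].
Qed.

Ltac solve_continuity :=
  repeat first
    [ assumption
    | apply continuity_realization
    | apply continuity_minus | apply continuity_plus | apply continuity_mult
    | apply continuity_clip_comp | apply continuity_id
    | apply continuity_const; intros ? ?; reflexivity ].

Lemma continuous_of_continuity F x : continuity F -> continuous F x.
Proof. intros HF; apply continuity_pt_filterlim, HF. Qed.

Lemma ex_RInt_continuity F a b : continuity F -> ex_RInt F a b.
Proof.
  intros HF; apply (@ex_RInt_continuous R_CompleteNormedModule).
  intros z _; apply continuous_of_continuity, HF.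
Qed.

Lemma RInt_ext_R (F G : R -> R) a b : (forall x, F x = G x) -> RInt F a b = RInt G a b.
Proof. intros H; apply RInt_ext; intros; apply H. Qed.

Lemma RInt_minus_continuity F G a b : continuity F -> continuity G ->
  RInt (fun x => F x - G x) a b = RInt F a b - RInt G a b.
Proof. intros; apply (RInt_minus F G a b); apply ex_RInt_continuity; assumption. Qed.

Lemma RInt_scal_continuity F k a b : continuity F ->
  RInt (fun x => k * F x) a b = k * RInt F a b.
Proof. intros; apply (RInt_scal F a b k), ex_RInt_continuity; assumption. Qed.

Lemma RInt_Chasles_continuity F a b c : continuity F ->
  RInt F a b + RInt F b c = RInt F a c.
Proof. intros; apply (RInt_Chasles F a b c); apply ex_RInt_continuity; assumption. Qed.

Lemma RInt_le_subinterval F a b c d : a <= c <= d -> d <= b -> continuity F ->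
  (forall x, a < x < b -> 0 <= F x) -> RInt F c d <= RInt F a b.
Proof.
  intros Hcd Hdb HF HF0.
  rewrite <- (RInt_Chasles_continuity F a c b), <- (RInt_Chasles_continuity F c d b)
    by exact HF.
  assert (0 <= RInt F a c)
    by (apply RInt_ge_0; [lra|apply ex_RInt_continuity, HF|intros; apply HF0; lra]).
  assert (0 <= RInt F d b)
    by (apply RInt_ge_0; [lra|apply ex_RInt_continuity, HF|intros; apply HF0; lra]).
  lra.
Qed.

Lemma zero_derivative_no_linear_increase (phi : R -> R) t0 d c s1 :
  is_derive phi t0 0 -> d <> 0 -> 0 < c -> 0 < s1 ->
  (forall s, 0 < s < s1 -> c * s <= phi (t0 + d * s) - phi t0) -> False.
Proof.
  intros Hder Hd Hc Hs1 Hinc; apply is_derive_Reals in Hder.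
  pose proof (Rabs_pos_lt d Hd) as Hdabs.
  destruct (Hder (c / Rabs d)) as [delta Hdelta]; [apply Rdiv_lt_0_compat; assumption|].
  pose proof (cond_pos delta) as Hdelta0.
  set (s := Rmin (delta / Rabs d) s1 / 2).
  assert (Hs0 : 0 < Rmin (delta / Rabs d) s1)
    by (apply Rmin_glb_lt; [apply Rdiv_lt_0_compat|]; assumption).
  assert (Hs : 0 < s < s1) by (pose proof (Rmin_r (delta / Rabs d) s1); unfold s; lra).
  assert (Hds : Rabs (d * s) = Rabs d * s) by (rewrite Rabs_mult, (Rabs_pos_eq s); lra).
  assert (Hsmall : Rabs (d * s) < delta).
  { rewrite Hds, Rmult_comm; apply Rlt_div_r; [lra|].
    pose proof (Rmin_l (delta / Rabs d) s1); unfold s; lra. }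
  specialize (Hdelta (d * s) ltac:(apply Rmult_integral_contrapositive; lra) Hsmall).
  rewrite Rminus_0_r, Rabs_div, Hds in Hdelta by (apply Rmult_integral_contrapositive; lra).
  set (X := Rabs (phi (t0 + d * s) - phi t0)) in Hdelta.
  assert (Hpos : 0 < Rabs d * s) by (apply Rmult_lt_0_compat; lra).
  apply (Rmult_lt_compat_r (Rabs d * s)) in Hdelta; [|exact Hpos].
  replace (X / (Rabs d * s) * (Rabs d * s)) with X in Hdelta by (field; lra).
  replace (c / Rabs d * (Rabs d * s)) with (c * s) in Hdelta by (field; lra).
  pose proof (Hinc s Hs); pose proof (Rle_abs (phi (t0 + d * s) - phi t0)); unfold X in *; lra.
Qed.

Lemma continuity_pt_ball F x0 eps : continuity_pt F x0 -> 0 < eps ->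
  exists d, 0 < d /\ forall x, Rabs (x - x0) < d -> Rabs (F x - F x0) < eps.
Proof.
  intros HF Heps; destruct (HF eps Heps) as [d [Hd Hball]].
  exists d; split; [exact Hd|]; intros x Hx.
  destruct (Req_dec x x0) as [->|Hne].
  - rewrite Rminus_eq_0, Rabs_R0; exact Heps.
  - apply (Hball x); split; [split; [exact I|congruence]|exact Hx].
Qed.

Lemma last_nonpositive_point (k : R -> R) a b : continuity k -> 0 < k b ->
  (exists x, a < x < b /\ k x <= 0) ->
  exists x0, a < x0 < b /\ k x0 <= 0 /\ forall x, x0 < x <= b -> 0 < k x.
Proof.
  intros Hk Hkb [x1 [Hx1 Hkx1]].
  set (E := fun x => a <= x <= b /\ k x <= 0).
  destruct (completeness E) as [m [Hub Hlub]].
  { exists b; intros z [Hz _]; lra. }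
  { exists x1; split; [lra|exact Hkx1]. }
  assert (Hx1m : x1 <= m) by (apply Hub; split; [lra|exact Hkx1]).
  assert (Hmb : m <= b) by (apply Hlub; intros z [Hz _]; lra).
  assert (Hkm : k m <= 0).
  { apply Rnot_lt_le; intros Hpos.
    destruct (continuity_pt_ball k m (k m) (Hk m) Hpos) as [d [Hd Hball]].
    assert (m <= m - d); [|lra].
    apply Hlub; intros z [Hz Hkz]; apply Rnot_lt_le; intros Hzd.
    assert (z <= m) by (apply Hub; split; assumption).
    specialize (Hball z ltac:(apply Rabs_def1; lra)); apply Rabs_def2 in Hball; lra. }
  exists m; repeat split; [lra| |exact Hkm|].
  - destruct (Req_dec m b) as [->|]; lra.
  - intros x Hx; apply Rnot_le_lt; intros Hkx.
    assert (x <= m) by (apply Hub; split; [lra|exact Hkx]); lra.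
Qed.

Lemma first_nonnegative_point (k : R -> R) a b : continuity k -> k a < 0 ->
  (exists x, a < x < b /\ 0 <= k x) ->
  exists x1, a < x1 < b /\ 0 <= k x1 /\ forall x, a <= x < x1 -> k x < 0.
Proof.
  intros Hk Hka [x [Hx Hkx]].
  set (k' := fun z => - k (- z)).
  assert (Hk' : continuity k').
  { apply continuity_opp, (continuity_comp Ropp k); [|exact Hk].
    apply continuity_opp, continuity_id. }
  destruct (last_nonpositive_point k' (- b) (- a) Hk') as [z0 [Hz0 [Hkz0 Hpos]]].
  - unfold k'; rewrite Ropp_involutive; lra.
  - exists (- x); unfold k'; rewrite Ropp_involutive; split; lra.
  - exists (- z0); unfold k' in *; split; [lra|split; [lra|]].
    intros y Hy; specialize (Hpos (- y) ltac:(lra)); rewrite Ropp_involutive in Hpos; lra.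
Qed.

Lemma exists_active_between w th c d : 0 < w -> c < d ->
  w * c + th < 1 -> 0 < w * d + th -> exists z, c < z < d /\ 0 < w * z + th < 1.
Proof.
  intros Hw Hcd Hc Hd.
  set (e0 := - th / w); set (e1 := (1 - th) / w).
  assert (He0 : w * e0 + th = 0) by (unfold e0; field; lra).
  assert (He1 : w * e1 + th = 1) by (unfold e1; field; lra).
  assert (Hlohi : Rmax c e0 < Rmin d e1) by (apply Rmax_lub_lt; apply Rmin_glb_lt; nra).
  exists ((Rmax c e0 + Rmin d e1) / 2).
  pose proof (Rmax_l c e0); pose proof (Rmax_r c e0);
  pose proof (Rmin_l d e1); pose proof (Rmin_r d e1).
  split; [lra|split; nra].
Qed.

Lemma near_active_lower_bound (G : R -> R) a b w th y eps :
  continuity G -> 0 < w -> a < y < b -> 0 < w * y + th < 1 ->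
  (forall x, a < x < b -> 0 < w * x + th < 1 -> 0 <= G x) -> 0 < eps ->
  exists eta, 0 < eta /\
    forall x, a < x < b -> - eta < w * x + th < 1 + eta -> - eps <= G x.
Proof.
  intros HG Hw Hy Huy Hact Heps.
  set (e0 := - th / w); set (e1 := (1 - th) / w).
  assert (He0 : w * e0 + th = 0) by (unfold e0; field; lra).
  assert (He1 : w * e1 + th = 1) by (unfold e1; field; lra).
  destruct (continuity_pt_ball G e0 (eps / 2) (HG e0)) as [d0 [Hd0 Hball0]]; [lra|].
  destruct (continuity_pt_ball G e1 (eps / 2) (HG e1)) as [d1 [Hd1 Hball1]]; [lra|].
  pose proof (Rmin_l d0 d1); pose proof (Rmin_r d0 d1).
  exists (w * Rmin d0 d1); split; [apply Rmult_lt_0_compat; [|apply Rmin_glb_lt]; assumption|].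
  intros x Hx Hux.
  destruct (Rle_lt_dec (w * x + th) 0) as [Hu0|Hu0];
    [|destruct (Rlt_le_dec (w * x + th) 1) as [Hu1|Hu1]].
  - (* compare x with an active point z on the other side of e0, both within d0 of e0 *)
    assert (Hxe : e0 - d0 < x <= e0) by (split; nra).
    assert (Hye : e0 < y) by nra.
    set (r := Rmin y (e0 + d0)).
    assert (Hr : e0 < r <= y /\ r <= e0 + d0)
      by (unfold r; pose proof (Rmin_l y (e0 + d0)); pose proof (Rmin_r y (e0 + d0));
          split; [split; [apply Rmin_glb_lt|]|]; lra).
    destruct (exists_active_between w th x r) as [z [Hz Huz]]; [exact Hw|lra|lra|nra|].
    assert (0 <= G z) by (apply Hact; [lra|exact Huz]).
    pose proof (Hball0 x ltac:(apply Rabs_def1; lra)) as Bx.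
    pose proof (Hball0 z ltac:(apply Rabs_def1; lra)) as Bz.
    apply Rabs_def2 in Bx; apply Rabs_def2 in Bz; lra.
  - apply Rle_trans with 0; [lra|apply Hact; [exact Hx|split; assumption]].
  - assert (Hxe : e1 <= x < e1 + d1) by (split; nra).
    assert (Hye : y < e1) by nra.
    set (r := Rmax y (e1 - d1)).
    assert (Hr : y <= r < e1 /\ e1 - d1 <= r)
      by (unfold r; pose proof (Rmax_l y (e1 - d1)); pose proof (Rmax_r y (e1 - d1));
          split; [split; [|apply Rmax_lub_lt]|]; lra).
    destruct (exists_active_between w th r x) as [z [Hz Huz]]; [exact Hw|lra|nra|lra|].
    assert (0 <= G z) by (apply Hact; [lra|exact Huz]).
    pose proof (Hball1 x ltac:(apply Rabs_def1; lra)) as Bx.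
    pose proof (Hball1 z ltac:(apply Rabs_def1; lra)) as Bz.
    apply Rabs_def2 in Bx; apply Rabs_def2 in Bz; lra.
Qed.

Lemma positive_active_window (G : R -> R) a b w th y :
  continuity G -> 0 < w -> a < y < b -> 0 < w * y + th < 1 -> 0 < G y ->
  exists del m, 0 < del /\ 0 < m /\ a <= y - del /\ y + del <= b /\
    forall x, y - del < x < y + del -> 0 < G x /\ m <= w * x + th <= 1 - m.
Proof.
  intros HG Hw Hy Huy HGy.
  destruct (continuity_pt_ball G y (G y) (HG y) HGy) as [d0 [Hd0 Hball]].
  set (m := Rmin (w * y + th) (1 - (w * y + th)) / 2).
  assert (Hm : 0 < m) by (apply Rdiv_lt_0_compat; [apply Rmin_glb_lt|]; lra).
  assert (Hm2 : 2 * m <= w * y + th /\ 2 * m <= 1 - (w * y + th))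
    by (pose proof (Rmin_l (w * y + th) (1 - (w * y + th)));
        pose proof (Rmin_r (w * y + th) (1 - (w * y + th))); unfold m; lra).
  pose proof (Rmin_l (Rmin d0 (m / w)) (Rmin (y - a) (b - y)));
  pose proof (Rmin_r (Rmin d0 (m / w)) (Rmin (y - a) (b - y))).
  pose proof (Rmin_l d0 (m / w)); pose proof (Rmin_r d0 (m / w));
  pose proof (Rmin_l (y - a) (b - y)); pose proof (Rmin_r (y - a) (b - y)).
  assert (Hdel : 0 < Rmin (Rmin d0 (m / w)) (Rmin (y - a) (b - y)))
    by (repeat apply Rmin_glb_lt; try apply Rdiv_lt_0_compat; lra).
  set (del := Rmin (Rmin d0 (m / w)) (Rmin (y - a) (b - y))) in *.
  assert (Hwdel : w * del <= m).
  { replace m with (w * (m / w)) by (field; lra). apply Rmult_le_compat_l; lra. }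
  exists del, m; repeat (split; [lra|]).
  intros x Hx; split.
  - specialize (Hball x ltac:(apply Rabs_def1; lra)); apply Rabs_def2 in Hball; lra.
  - assert (Hux : Rabs (w * x + th - (w * y + th)) < m).
    { replace (w * x + th - (w * y + th)) with (w * (x - y)) by ring.
      rewrite Rabs_mult, (Rabs_pos_eq w) by lra.
      apply Rlt_le_trans with (w * del); [|exact Hwdel].
      apply Rmult_lt_compat_l; [lra|apply Rabs_def1; lra]. }
    apply Rabs_def2 in Hux; lra.
Qed.

Section Stationarity.

Variables (a b : R) (g p : R -> R).
Hypotheses (hab : a < b) (g_cont : continuity g) (p_cont : continuity p)
  (p_pos : forall x, a < x < b -> 0 < p x).

Lemma RInt_sq_shift_ge (D : R -> R) : continuity D ->
  2 * RInt (fun x => g x * D x * p x) a b <=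
  RInt (fun x => (g x + D x) ^ 2 * p x) a b - RInt (fun x => g x ^ 2 * p x) a b.
Proof.
  intros HD.
  rewrite <- RInt_scal_continuity, <- RInt_minus_continuity by solve_continuity.
  apply RInt_le; [lra|apply ex_RInt_continuity; solve_continuity..|].
  intros x Hx; pose proof (p_pos x Hx); nra.
Qed.

Lemma stationary_no_linear_increase (phi : R -> R) (D : R -> R -> R) t0 d c s1 :
  (forall t, continuity (D t)) -> (forall x, D t0 x = 0) ->
  (forall t, phi t = RInt (fun x => (g x + D t x) ^ 2 * p x) a b) ->
  is_derive phi t0 0 -> d <> 0 -> 0 < c -> 0 < s1 ->
  (forall s, 0 < s < s1 -> c * s <= RInt (fun x => g x * D (t0 + d * s) x * p x) a b) ->
  False.
Proof.
  intros HD HD0 Hphi Hder Hd Hc Hs1 Hinc.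
  apply (zero_derivative_no_linear_increase phi t0 d (2 * c) s1 Hder Hd); [lra|exact Hs1|].
  intros s Hs.
  assert (Hphi0 : phi t0 = RInt (fun x => g x ^ 2 * p x) a b).
  { rewrite Hphi; apply RInt_ext_R; intros x; rewrite HD0, Rplus_0_r; reflexivity. }
  rewrite Hphi0, Hphi.
  pose proof (RInt_sq_shift_ge (D (t0 + d * s)) (HD _)); pose proof (Hinc s Hs); lra.
Qed.

Lemma output_bias_no_strict_sign (phi : R -> R) t0 sg :
  (forall t, phi t = RInt (fun x => (g x + (t - t0)) ^ 2 * p x) a b) ->
  is_derive phi t0 0 -> sg = 1 \/ sg = -1 -> ~ (forall x, a < x < b -> 0 < sg * g x).
Proof.
  intros Hphi Hder Hsg Hpos.
  set (K := RInt (fun x => sg * g x * p x) a b).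
  assert (HK : 0 < K).
  { apply RInt_gt_0; [exact hab| |intros; apply continuous_of_continuity; solve_continuity].
    intros x Hx; apply Rmult_lt_0_compat; [apply Hpos|apply p_pos]; exact Hx. }
  apply (stationary_no_linear_increase phi (fun t _ => t - t0) t0 sg K 1);
    [intros; solve_continuity|intros; ring|exact Hphi|exact Hder|lra|exact HK|lra|].
  intros s _; cbv beta; apply Req_le.
  unfold K; rewrite Rmult_comm, <- RInt_scal_continuity by solve_continuity.
  apply RInt_ext_R; intros; ring.
Qed.

Lemma RInt_shift_lower_bound (G delta : R -> R) c d s eps :
  a <= c <= d -> d <= b -> continuity G -> continuity delta -> 0 <= s -> 0 <= eps ->
  (forall x, a < x < b -> 0 <= delta x <= s) ->
  (forall x, a < x < b -> delta x <> 0 -> - eps <= G x) ->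
  (forall x, c < x < d -> delta x = s) ->
  s * RInt (fun x => G x * p x) c d - eps * s * RInt p a b <=
  RInt (fun x => G x * delta x * p x) a b.
Proof.
  intros Hc Hd HG Hdelta Hs Heps Hbounds Hlow Hwin.
  set (H := fun x => G x * delta x * p x + eps * s * p x).
  assert (HH : continuity H) by (unfold H; solve_continuity).
  assert (Hsplit : RInt (fun x => G x * delta x * p x) a b = RInt H a b - eps * s * RInt p a b).
  { rewrite <- RInt_scal_continuity, <- RInt_minus_continuity by solve_continuity.
    apply RInt_ext_R; intros; unfold H; ring. }
  assert (Hwindow : s * RInt (fun x => G x * p x) c d <= RInt H c d).
  { rewrite <- RInt_scal_continuity by solve_continuity.
    apply RInt_le; [lra|apply ex_RInt_continuity; solve_continuity..|].
    intros x Hx; unfold H; rewrite Hwin by exact Hx.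
    pose proof (p_pos x ltac:(lra)); assert (0 <= eps * s) by (apply Rmult_le_pos; lra); nra. }
  assert (Hnonneg : forall x, a < x < b -> 0 <= H x).
  { intros x Hx; unfold H; pose proof (p_pos x Hx); pose proof (Hbounds x Hx).
    destruct (Req_dec (delta x) 0) as [E|E].
    - rewrite E; assert (0 <= eps * s) by (apply Rmult_le_pos; lra); nra.
    - pose proof (Hlow x Hx E).
      assert (0 <= delta x * (G x + eps)) by (apply Rmult_le_pos; lra).
      assert (0 <= eps * (s - delta x)) by (apply Rmult_le_pos; lra).
      nra. }
  pose proof (RInt_le_subinterval H a b c d Hc Hd HH Hnonneg); lra.
Qed.

Lemma RInt_hidden_shift_ge v w th sg s c d eps :
  0 < v -> sg = 1 \/ sg = -1 -> a <= c <= d -> d <= b -> 0 <= s -> 0 <= eps ->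
  (forall x, a < x < b -> - s < w * x + th < 1 + s -> - eps <= sg * g x) ->
  (forall x, c < x < d -> s <= w * x + th <= 1 - s) ->
  v * (s * RInt (fun x => sg * g x * p x) c d - eps * s * RInt p a b) <=
  RInt (fun x => g x * (v * (clip (w * x + (th + sg * s)) - clip (w * x + th))) * p x) a b.
Proof.
  intros Hv Hsg Hc Hd Hs Heps Hnear Hwin.
  set (delta := fun x => sg * (clip (w * x + th + sg * s) - clip (w * x + th))).
  replace (RInt (fun x => g x * (v * (clip (w * x + (th + sg * s)) - clip (w * x + th))) * p x) a b)
    with (v * RInt (fun x => sg * g x * delta x * p x) a b).
  - apply Rmult_le_compat_l; [lra|].
    apply (RInt_shift_lower_bound (fun x => sg * g x) delta c d s eps Hc Hd);
      [solve_continuity|unfold delta; solve_continuity|exact Hs|exact Heps| | |].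
    + intros x _; apply clip_shift_bounds; [exact Hsg|exact Hs].
    + intros x Hx Hne; apply Hnear; [exact Hx|].
      exact (clip_shift_support sg s (w * x + th) Hsg Hs Hne).
    + intros x Hx; pose proof (Hwin x Hx); apply clip_shift_interior; [exact Hsg|lra|lra].
  - rewrite <- RInt_scal_continuity by (unfold delta; solve_continuity).
    apply RInt_ext_R; intros x; unfold delta; rewrite Rplus_assoc.
    destruct Hsg as [-> | ->]; ring.
Qed.

Lemma hidden_bias_no_strict_sign (phi : R -> R) v w th sg y :
  0 < v -> 0 < w -> sg = 1 \/ sg = -1 ->
  (forall t, phi t =
     RInt (fun x => (g x + v * (clip (w * x + t) - clip (w * x + th))) ^ 2 * p x) a b) ->
  is_derive phi th 0 -> a < y < b -> 0 < w * y + th < 1 -> 0 < sg * g y ->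
  ~ (forall x, a < x < b -> 0 < w * x + th < 1 -> 0 <= sg * g x).
Proof.
  intros Hv Hw Hsg Hphi Hder Hy Huy Hgy Hact.
  assert (HG : continuity (fun x => sg * g x)) by solve_continuity.
  destruct (positive_active_window _ a b w th y HG Hw Hy Huy Hgy)
    as [del [m [Hdel [Hm [Hya [Hyb Hwin]]]]]].
  set (K := RInt (fun x => sg * g x * p x) (y - del) (y + del)).
  assert (HK : 0 < K).
  { apply RInt_gt_0; [lra| |intros; apply continuous_of_continuity; solve_continuity].
    intros x Hx; apply Rmult_lt_0_compat; [apply Hwin, Hx|apply p_pos; lra]. }
  set (P := RInt p a b).
  assert (HP : 0 <= P)
    by (apply RInt_ge_0; [lra|apply ex_RInt_continuity, p_cont|intros; apply Rlt_le, p_pos; lra]).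
  (* eps is chosen so that the loss near the boundary costs at most half of the gain K *)
  set (eps := K / (2 * (P + 1))).
  assert (Heps : 0 < eps) by (apply Rdiv_lt_0_compat; lra).
  assert (HepsP : eps * P <= K / 2).
  { apply Rle_trans with (eps * (P + 1)); [apply Rmult_le_compat_l; lra|].
    right; unfold eps; field; lra. }
  destruct (near_active_lower_bound _ a b w th y eps HG Hw Hy Huy Hact Heps) as [eta [Heta Hnear]].
  pose proof (Rmin_l eta m); pose proof (Rmin_r eta m).
  apply (stationary_no_linear_increase phi (fun t x => v * (clip (w * x + t) - clip (w * x + th)))
           th sg (v * K / 2) (Rmin eta m)); cbv beta.
  - intros t; solve_continuity.
  - intros x; ring.
  - exact Hphi.
  - exact Hder.
  - lra.
  - apply Rdiv_lt_0_compat; [apply Rmult_lt_0_compat|]; lra.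
  - apply Rmin_glb_lt; assumption.
  - intros s Hs.
    eapply Rle_trans; [|apply (RInt_hidden_shift_ge v w th sg s (y - del) (y + del) eps)];
      [|exact Hv|exact Hsg|lra|exact Hyb|lra|lra| |].
    + assert (eps * P * s <= K / 2 * s) by (apply Rmult_le_compat_r; lra).
      replace (v * K / 2 * s) with (v * (s * K / 2)) by field.
      apply Rmult_le_compat_l; [lra|]; fold K P; lra.
    + intros x Hx Hux; apply Hnear; [exact Hx|lra].
    + intros x Hx; pose proof (proj2 (Hwin x Hx)); lra.
Qed.

End Stationarity.

Lemma realization_upd_output h v w th t x :
  realization h v w (upd th (S h) t) x = realization h v w th x + (t - th (S h)).
Proof.
  unfold realization, upd at 1; rewrite Nat.eqb_refl.
  rewrite (sum1_ext h _ (fun i => v i * clip (w i * x + th i))); [ring|].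
  intros i Hi; unfold upd; replace (Nat.eqb i (S h)) with false; [reflexivity|].
  symmetry; apply Nat.eqb_neq; lia.
Qed.

Lemma realization_upd_hidden h v w th i t x : (1 <= i <= h)%nat ->
  realization h v w (upd th i t) x =
  realization h v w th x + v i * (clip (w i * x + t) - clip (w i * x + th i)).
Proof.
  intros Hi; unfold realization, upd at 1.
  replace (Nat.eqb (S h) i) with false by (symmetry; apply Nat.eqb_neq; lia).
  rewrite (sum1_upd h (fun k z => v k * clip (w k * x + z)) th i t Hi); ring.
Qed.

Lemma realization_sub h v w th x y :
  realization h v w th y - realization h v w th x =
  sum1 h (fun i => v i * (clip (w i * y + th i) - clip (w i * x + th i))).
Proof.
  unfold realization.
  rewrite (sum1_ext h (fun i => v i * (clip (w i * y + th i) - clip (w i * x + th i)))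
                       (fun i => v i * clip (w i * y + th i) - v i * clip (w i * x + th i)))
    by (intros; ring).
  rewrite sum1_minus; ring.
Qed.

Section CriticalPoint.

Variables (a b : R) (h : nat) (v w : nat -> R) (f p : R -> R) (th : nat -> R).
Hypotheses (hab : a < b)
  (hv : forall i, (1 <= i <= h)%nat -> 0 < v i)
  (hw : forall i, (1 <= i <= h)%nat -> 0 < w i)
  (f_cont : continuity f) (p_cont : continuity p)
  (p_pos : forall x, a < x < b -> 0 < p x)
  (f_mono : forall x y, x <= y -> f x <= f y)
  (th_crit : forall j, (1 <= j <= S h)%nat ->
     is_derive (fun t => risk a b h v w f p (upd th j t)) (th j) 0).

Definition residual (x : R) : R := realization h v w th x - f x.

Definition active (i : nat) (x : R) : Prop := 0 < w i * x + th i < 1.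

Lemma continuity_residual : continuity residual.
Proof. unfold residual; solve_continuity. Qed.

Lemma risk_upd_output t :
  risk a b h v w f p (upd th (S h) t) =
  RInt (fun x => (residual x + (t - th (S h))) ^ 2 * p x) a b.
Proof.
  unfold risk; apply RInt_ext_R; intros x.
  rewrite realization_upd_output; unfold residual; ring.
Qed.

Lemma risk_upd_hidden i t : (1 <= i <= h)%nat ->
  risk a b h v w f p (upd th i t) =
  RInt (fun x => (residual x + v i * (clip (w i * x + t) - clip (w i * x + th i))) ^ 2 * p x) a b.
Proof.
  intros Hi; unfold risk; apply RInt_ext_R; intros x.
  rewrite realization_upd_hidden by exact Hi; unfold residual; ring.
Qed.

Lemma residual_changes_sign sg : sg = 1 \/ sg = -1 ->
  exists x, a < x < b /\ sg * residual x <= 0.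
Proof.
  intros Hsg; apply NNPP; intros Hno.
  apply (output_bias_no_strict_sign a b residual p hab continuity_residual p_cont p_pos
           (fun t => risk a b h v w f p (upd th (S h) t)) (th (S h)) sg risk_upd_output);
    [apply th_crit; lia|exact Hsg|].
  intros x Hx; apply Rnot_le_lt; intros Hle; apply Hno; exists x; split; assumption.
Qed.

Lemma residual_no_strict_sign_on_active i sg y : (1 <= i <= h)%nat -> sg = 1 \/ sg = -1 ->
  a < y < b -> active i y -> 0 < sg * residual y ->
  ~ (forall x, a < x < b -> active i x -> 0 <= sg * residual x).
Proof.
  intros Hi Hsg Hy Huy Hry.
  apply (hidden_bias_no_strict_sign a b residual p hab continuity_residual p_cont p_pos
           (fun t => risk a b h v w f p (upd th i t)) (v i) (w i) (th i) sg y
           (hv i Hi) (hw i Hi) Hsg);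
    [intros t; apply risk_upd_hidden, Hi|apply th_crit; lia|exact Hy|exact Huy|exact Hry].
Qed.

Lemma active_iff_psi i x : (1 <= i <= h)%nat ->
  (psi w th i < x < psi w th i + / w i <-> active i x).
Proof.
  intros Hi; pose proof (hw i Hi) as Hwi; unfold psi, active.
  assert (E : w i * x + th i = w i * (x - - / w i * th i)) by (field; lra).
  assert (Hinv : w i * / w i = 1) by (field; lra).
  rewrite E; split; intros [H1 H2]; split; nra.
Qed.

Lemma sum1_le_active_sum (F : nat -> R) x : a < x < b ->
  (forall i, (1 <= i <= h)%nat -> F i <= v i /\ (~ active i x -> F i <= 0)) ->
  sum1 h F <= active_sum a b h v w th x.
Proof.
  intros Hx HF; unfold active_sum; apply sum1_le; intros i Hi.
  destruct (HF i Hi) as [Hle Hinact].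
  destruct (classic (active i x)) as [A|A].
  - apply (active_iff_psi i x Hi) in A; repeat destruct Rlt_dec; lra.
  - specialize (Hinact A); repeat destruct Rlt_dec; lra.
Qed.

Lemma active_sum_nonneg x : 0 <= active_sum a b h v w th x.
Proof.
  unfold active_sum; apply sum1_nonneg; intros i Hi.
  pose proof (hv i Hi); repeat destruct Rlt_dec; lra.
Qed.

Lemma Vsup_ge z x : a < x < b -> z <= active_sum a b h v w th x ->
  Rbar_le z (Vsup a b h v w th).
Proof.
  intros Hx Hz; apply Rbar_le_trans with (active_sum a b h v w th x); [exact Hz|].
  apply (proj1 (Lub_Rbar_correct _)); exists x; split; [exact Hx|reflexivity].
Qed.

Lemma hidden_increment_nonpos_right i x0 : (1 <= i <= h)%nat -> a < x0 < b ->
  (forall x, x0 < x <= b -> 0 < residual x) -> ~ active i x0 ->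
  clip (w i * b + th i) <= clip (w i * x0 + th i).
Proof.
  intros Hi Hx0 Hpos Hinact; pose proof (hw i Hi) as Hwi.
  destruct (Rle_lt_dec 1 (w i * x0 + th i)) as [H1|H1]; [rewrite !clip_eq1 by nra; lra|].
  assert (H0 : w i * x0 + th i <= 0)
    by (apply Rnot_lt_le; intro; apply Hinact; split; assumption).
  destruct (Rle_lt_dec (w i * b + th i) 0) as [Hb|Hb]; [rewrite !clip_eq0 by lra; lra|].
  (* unit i switches on inside (x0, b), where the residual is positive *)
  exfalso; destruct (exists_active_between (w i) (th i) x0 b Hwi) as [y [Hy Huy]];
    [lra|lra|exact Hb|].
  apply (residual_no_strict_sign_on_active i 1 y Hi (or_introl eq_refl)); [lra|exact Huy| |].
  - rewrite Rmult_1_l; apply Hpos; lra.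
  - intros x Hx [Hux _]; rewrite Rmult_1_l; left; apply Hpos; split; [nra|lra].
Qed.

Lemma hidden_increment_nonpos_left i x1 : (1 <= i <= h)%nat -> a < x1 < b ->
  (forall x, a <= x < x1 -> residual x < 0) -> ~ active i x1 ->
  clip (w i * x1 + th i) <= clip (w i * a + th i).
Proof.
  intros Hi Hx1 Hneg Hinact; pose proof (hw i Hi) as Hwi.
  destruct (Rle_lt_dec (w i * x1 + th i) 0) as [H0|H0]; [rewrite !clip_eq0 by nra; lra|].
  assert (H1 : 1 <= w i * x1 + th i)
    by (apply Rnot_lt_le; intro; apply Hinact; split; assumption).
  destruct (Rle_lt_dec 1 (w i * a + th i)) as [Ha|Ha]; [rewrite !clip_eq1 by lra; lra|].
  (* unit i saturates inside (a, x1), where the residual is negative *)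
  exfalso; destruct (exists_active_between (w i) (th i) a x1 Hwi) as [y [Hy Huy]];
    [lra|exact Ha|lra|].
  apply (residual_no_strict_sign_on_active i (-1) y Hi (or_intror eq_refl)); [lra|exact Huy| |].
  - pose proof (Hneg y ltac:(lra)); lra.
  - intros x Hx [_ Hux]; assert (x < x1) by nra; pose proof (Hneg x ltac:(lra)); lra.
Qed.

Lemma realization_increment_right x0 : a < x0 < b ->
  (forall x, x0 < x <= b -> 0 < residual x) ->
  realization h v w th b - realization h v w th x0 <= active_sum a b h v w th x0.
Proof.
  intros Hx0 Hpos; rewrite realization_sub; apply sum1_le_active_sum; [exact Hx0|].
  intros i Hi; pose proof (hv i Hi).
  pose proof (clip_bounds (w i * b + th i)); pose proof (clip_bounds (w i * x0 + th i)).
  split; [nra|intros Hinact].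
  pose proof (hidden_increment_nonpos_right i x0 Hi Hx0 Hpos Hinact); nra.
Qed.

Lemma realization_increment_left x1 : a < x1 < b ->
  (forall x, a <= x < x1 -> residual x < 0) ->
  realization h v w th x1 - realization h v w th a <= active_sum a b h v w th x1.
Proof.
  intros Hx1 Hneg; rewrite realization_sub; apply sum1_le_active_sum; [exact Hx1|].
  intros i Hi; pose proof (hv i Hi).
  pose proof (clip_bounds (w i * x1 + th i)); pose proof (clip_bounds (w i * a + th i)).
  split; [nra|intros Hinact].
  pose proof (hidden_increment_nonpos_left i x1 Hi Hx1 Hneg Hinact); nra.
Qed.

Lemma right_gap_le_Vsup :
  Rbar_le (realization h v w th b - f b) (Vsup a b h v w th).
Proof.
  destruct (Rle_lt_dec (realization h v w th b - f b) 0) as [Hle|Hgt].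
  { apply (Vsup_ge _ ((a + b) / 2)); [lra|].
    pose proof (active_sum_nonneg ((a + b) / 2)); lra. }
  destruct (last_nonpositive_point residual a b continuity_residual Hgt) as [x0 [Hx0 [Hr0 Hpos]]].
  { destruct (residual_changes_sign 1 (or_introl eq_refl)) as [x [Hx Hr]].
    exists x; split; [exact Hx|lra]. }
  apply (Vsup_ge _ x0 Hx0).
  pose proof (realization_increment_right x0 Hx0 Hpos); pose proof (f_mono x0 b ltac:(lra)).
  unfold residual in Hr0; lra.
Qed.

Lemma left_gap_le_Vsup :
  Rbar_le (f a - realization h v w th a) (Vsup a b h v w th).
Proof.
  destruct (Rle_lt_dec (f a - realization h v w th a) 0) as [Hle|Hgt].
  { apply (Vsup_ge _ ((a + b) / 2)); [lra|].
    pose proof (active_sum_nonneg ((a + b) / 2)); lra. }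
  destruct (first_nonnegative_point residual a b continuity_residual) as [x1 [Hx1 [Hr1 Hneg]]].
  { unfold residual; lra. }
  { destruct (residual_changes_sign (-1) (or_intror eq_refl)) as [x [Hx Hr]].
    exists x; split; [exact Hx|lra]. }
  apply (Vsup_ge _ x1 Hx1).
  pose proof (realization_increment_left x1 Hx1 Hneg); pose proof (f_mono a x1 ltac:(lra)).
  unfold residual in Hr1; lra.
Qed.

End CriticalPoint.

Theorem corollary2p13
  (a b : R) (hab : a < b) (h : nat) (v w : nat -> R)
  (hv : forall i, (1 <= i <= h)%nat -> 0 < v i)
  (hw : forall i, (1 <= i <= h)%nat -> 0 < w i)
  (f p : R -> R)
  (hf : forall x, continuous f x) (hp : forall x, continuous p x)
  (hp0 : forall x, 0 <= p x)
  (hpsupp : forall x, 0 < p x <-> a < x < b)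
  (hmono : forall x y, x <= y -> f x <= f y)
  (hLip : exists Lf : R,
      (forall x y, a <= x <= b -> a <= y <= b -> x <> y ->
         Rabs (f x - f y) / Rabs (x - y) <= Lf)
      /\ (forall i, (1 <= i <= h)%nat -> Lf < v i * w i))
  (vartheta : nat -> R)
  (hcrit : forall j, (1 <= j <= S h)%nat ->
      is_derive (fun t => risk a b h v w f p (upd vartheta j t)) (vartheta j) 0) :
  Rbar_le
    (Finite (Rmax (realization h v w vartheta b - f b)
                  (f a - realization h v w vartheta a)))
    (Vsup a b h v w vartheta).
Proof.
  assert (f_cont : continuity f) by (intros x; apply continuity_pt_filterlim, hf).
  assert (p_cont : continuity p) by (intros x; apply continuity_pt_filterlim, hp).
  assert (p_pos : forall x, a < x < b -> 0 < p x) by (intros x; apply hpsupp).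
  unfold Rmax; destruct Rle_dec.
  - exact (left_gap_le_Vsup a b h v w f p vartheta hab hv hw f_cont p_cont p_pos hmono hcrit).
  - exact (right_gap_le_Vsup a b h v w f p vartheta hab hv hw f_cont p_cont p_pos hmono hcrit).
Qed.
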